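(* Let $A$ be a real $n\times n$ nonsingular skew-symmetric matrix ($A^t=-A$), $b\in\mathbb{R}^n$, and $x$ the solution of $Ax=b$. Let $m\ge 0$, $q_e=\lceil m/2\rceil$, $q_o=\lfloor m/2\rfloor$, and let $z\in\mathcal{K}_m(A,b)$ be written as $z=z_e+z_o$ with $z_e\in\mathcal{K}_{q_e}(A^2,b)$ and $z_o\in\mathcal{K}_{q_o}(A^2,Ab)$. Then \[\|z-x\|^2=\|z_o-x\|^2+\|z_e\|^2\quad\text{and}\quad \|b-Az\|^2=\|b-Az_o\|^2+\|Az_e\|^2.\]
   Context: For a matrix $B$, a vector $c$ and an integer $m\ge 0$, the Krylov subspace is $\mathcal{K}_m(B,c)=\operatorname{span}\{c,Bc,\ldots,B^{m-1}c\}$ (with $\mathcal{K}_0(B,c)=\{0\}$). $\|\cdot\|$ is the Euclidean norm. Every $z\in\mathcal{K}_m(A,b)$ admits such a decomposition by grouping even and odd powers of $A$. *)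

(* Real numbers are modelled by an arbitrary real closed field. *)
From HB Require Import structures.
From mathcomp Require Import all_boot all_order all_algebra.
Set Implicit Arguments. Unset Strict Implicit. Unset Printing Implicit Defensive.
Import Order.TTheory GRing.Theory Num.Theory.
Local Open Scope ring_scope.

Definition vnorm (R : rcfType) (n : nat) (v : 'cV[R]_n) : R :=
  Num.sqrt (\sum_(i < n) (v i 0) ^+ 2).

Definition mxpow (R : rcfType) (n : nat) (B : 'M[R]_n) (k : nat) : 'M[R]_n :=
  iter k (fun M => B *m M) 1%:M.

Definition in_krylov (R : rcfType) (n m : nat) (B : 'M[R]_n) (c : 'cV[R]_n)
  (z : 'cV[R]_n) : Prop :=
  exists a : 'I_m -> R, z = \sum_(i < m) a i *: (mxpow B i *m c).

From HB Require Import structures.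
From mathcomp Require Import all_boot all_order all_algebra.
From mathcomp Require Import lra.
Import Order.TTheory GRing.Theory Num.Theory.
Local Open Scope ring_scope.

(* Since b = A x, every vector in play is a combination of the vectors A^k x.
   For skew-symmetric A we have <A^i x, A^j x> = (-1)^i <x, A^(i+j) x>, and
   <x, A^k x> = 0 for odd k because (A^k)^T = -A^k.  Hence combinations of even
   powers are orthogonal to combinations of odd powers.  Now z_e only involves
   odd powers, z_o - x only even ones, A z_e even ones and b - A z_o odd ones,
   and both identities are instances of Pythagoras' theorem. *)

Section InnerProduct.
Context {R : comPzRingType} {n : nat}.
Implicit Types (u v w : 'cV[R]_n).

Definition vdot u v : R := (u^T *m v) 0 0.

Lemma vdotC u v : vdot u v = vdot v u.
Proof.
rewrite /vdot; have -> : v^T *m u = (u^T *m v)^T by rewrite trmx_mul trmxK.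
by rewrite [RHS]mxE.
Qed.

Lemma vdotDl u v w : vdot (u + v) w = vdot u w + vdot v w.
Proof. by rewrite /vdot raddfD /= mulmxDl mxE. Qed.

Lemma vdotDr u v w : vdot w (u + v) = vdot w u + vdot w v.
Proof. by rewrite /vdot mulmxDr mxE. Qed.

Lemma vdotZl a u w : vdot (a *: u) w = a * vdot u w.
Proof. by rewrite /vdot linearZ /= -scalemxAl mxE. Qed.

Lemma vdotZr a u w : vdot w (a *: u) = a * vdot w u.
Proof. by rewrite /vdot -scalemxAr mxE. Qed.

Lemma vdot_suml I (r : seq I) (F : I -> 'cV[R]_n) w :
  vdot (\sum_(i <- r) F i) w = \sum_(i <- r) vdot (F i) w.
Proof. by rewrite /vdot raddf_sum /= mulmx_suml summxE. Qed.

Lemma vdot_sumr I (r : seq I) (F : I -> 'cV[R]_n) w :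
  vdot w (\sum_(i <- r) F i) = \sum_(i <- r) vdot w (F i).
Proof. by rewrite /vdot mulmx_sumr summxE. Qed.

End InnerProduct.

Section EuclideanNorm.
Context {R : rcfType} {n : nat}.
Implicit Types (u v : 'cV[R]_n).

Lemma vnorm_sqr u : vnorm u ^+ 2 = vdot u u.
Proof.
rewrite /vnorm sqr_sqrtr; last by apply: sumr_ge0 => i _; apply: sqr_ge0.
by rewrite /vdot mxE; apply: eq_bigr => i _; rewrite mxE expr2.
Qed.

Lemma vnormN u : vnorm (- u) = vnorm u.
Proof. by rewrite /vnorm; congr Num.sqrt; apply: eq_bigr => i _; rewrite mxE sqrrN. Qed.

Lemma vnorm_sqrD_orth u v :
  vdot u v = 0 -> vnorm (u + v) ^+ 2 = vnorm u ^+ 2 + vnorm v ^+ 2.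
Proof.
move=> uv0; rewrite !vnorm_sqr vdotDl !vdotDr uv0 vdotC uv0.
by rewrite addr0 add0r.
Qed.

End EuclideanNorm.

Section MatrixPowers.
Context {R : rcfType} {n : nat} (B : 'M[R]_n).

Lemma mxpowD i j : mxpow B (i + j) = mxpow B i *m mxpow B j.
Proof.
elim: i => [|i IH]; first by rewrite mul1mx.
by rewrite addSn /= IH mulmxA.
Qed.

Lemma mxpowSr k : mxpow B k.+1 = mxpow B k *m B.
Proof. by rewrite -addn1 mxpowD /= mulmx1. Qed.

Lemma mxpow_sqr k : mxpow (B *m B) k = mxpow B k.*2.
Proof. by elim: k => //= k ->; rewrite mulmxA. Qed.

End MatrixPowers.

Section SkewSymmetric.
Context {R : rcfType} {n : nat} (A : 'M[R]_n).
Hypothesis skewA : A^T = - A.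
Implicit Types (u v w x : 'cV[R]_n).

Lemma vdot_skewl u w : vdot (A *m u) w = - vdot u (A *m w).
Proof. by rewrite /vdot trmx_mul skewA mulmxN mulNmx mxE -mulmxA. Qed.

Lemma vdot_mxpowl k u w :
  vdot (mxpow A k *m u) w = (-1) ^+ k * vdot u (mxpow A k *m w).
Proof.
elim: k u w => [|k IH] u w; first by rewrite !mul1mx mul1r.
by rewrite /= -mulmxA vdot_skewl IH mulmxA -mxpowSr exprS mulN1r mulNr.
Qed.

Lemma vdot_mxpow_odd i j x :
  odd (i + j) -> vdot (mxpow A i *m x) (mxpow A j *m x) = 0.
Proof.
move=> odd_ij; rewrite vdot_mxpowl mulmxA -mxpowD.
set d := vdot x _.
have d_opp : d = - d.
  by rewrite {1}/d vdotC vdot_mxpowl -signr_odd odd_ij expr1 mulN1r.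
suff -> : d = 0 by rewrite mulr0.
lra.
Qed.

Definition parity_span x (p : bool) u : Prop :=
  exists2 s : seq (R * nat), all (fun t => odd t.2 == p) s
    & u = \sum_(t <- s) t.1 *: (mxpow A t.2 *m x).

Lemma parity_span_mxpow x k : parity_span x (odd k) (mxpow A k *m x).
Proof. by exists [:: (1, k)]; rewrite ?big_seq1 ?scale1r //= eqxx. Qed.

Lemma parity_spanD {x p u v} :
  parity_span x p u -> parity_span x p v -> parity_span x p (u + v).
Proof.
move=> [s sp ->] [t tp ->].
by exists (s ++ t); rewrite ?all_cat ?sp ?tp ?big_cat.
Qed.

Lemma parity_spanZ {x p} a {u} : parity_span x p u -> parity_span x p (a *: u).
Proof.
move=> [s sp ->]; exists [seq (a * t.1, t.2) | t <- s]; first by rewrite all_map.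
rewrite big_map scaler_sumr; by apply: eq_bigr => t _; rewrite scalerA.
Qed.

Lemma parity_spanN {x p u} : parity_span x p u -> parity_span x p (- u).
Proof. by move=> /(parity_spanZ (-1)); rewrite scaleN1r. Qed.

Lemma parity_span_mulmx {x p u} :
  parity_span x p u -> parity_span x (~~ p) (A *m u).
Proof.
move=> [s sp ->]; exists [seq (t.1, t.2.+1) | t <- s].
  by rewrite all_map; apply/allP => t /(allP sp) /= /eqP <-.
rewrite big_map mulmx_sumr; apply: eq_bigr => t _.
by rewrite -scalemxAr mulmxA.
Qed.

Lemma parity_span_krylov k K x u :
  in_krylov K (A *m A) (mxpow A k *m x) u -> parity_span x (odd k) u.
Proof.
move=> [a ->]; exists [seq (a i, i.*2 + k)%N | i <- index_enum 'I_K].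
  by apply/allP => t /mapP [i _ ->]; rewrite /= oddD odd_double.
rewrite big_map; apply: eq_bigr => i _.
by rewrite mxpow_sqr mulmxA -mxpowD.
Qed.

Lemma parity_span_orth {x p u v} :
  parity_span x p u -> parity_span x (~~ p) v -> vdot u v = 0.
Proof.
move=> [s sp ->] [t tp ->]; rewrite vdot_suml big1_seq // => i /andP [_ si].
rewrite vdotZl vdot_sumr big1_seq ?mulr0 // => j /andP [_ tj].
rewrite vdotZr vdot_mxpow_odd ?mulr0 // oddD.
by move: (allP sp i si) (allP tp j tj) => /eqP -> /eqP ->; rewrite addbN addbb.
Qed.

End SkewSymmetric.

Theorem theorem2 (R : rcfType) (n : nat) (A : 'M[R]_n) (b x : 'cV[R]_n)
  (hskew : A^T = - A) (hinv : A \in unitmx) (hx : A *m x = b)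
  (m : nat) (z ze zo : 'cV[R]_n)
  (hz : in_krylov m A b z)
  (hze : in_krylov (uphalf m) (A *m A) b ze)
  (hzo : in_krylov m./2 (A *m A) (A *m b) zo)
  (hdec : z = ze + zo) :
  vnorm (z - x) ^+ 2 = vnorm (zo - x) ^+ 2 + vnorm ze ^+ 2 /\
  vnorm (b - A *m z) ^+ 2 = vnorm (b - A *m zo) ^+ 2 + vnorm (A *m ze) ^+ 2.
Proof.
have b_pow : b = mxpow A 1 *m x by rewrite /= mulmx1.
have Ab_pow : A *m b = mxpow A 2 *m x by rewrite b_pow mulmxA.
have ze_odd : parity_span A x true ze.
  by move: hze; rewrite b_pow; apply: parity_span_krylov.
have zo_even : parity_span A x false zo.
  by move: hzo; rewrite Ab_pow; apply: parity_span_krylov.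
have x_even : parity_span A x false x.
  by have := parity_span_mxpow A x 0; rewrite mul1mx.
have zox_even := parity_spanD A zo_even (parity_spanN A x_even).
have Aze_even := parity_span_mulmx A ze_odd.
have res_odd : parity_span A x true (b - A *m zo).
  rewrite -hx -mulmxBr.
  exact (parity_span_mulmx A (parity_spanD A x_even (parity_spanN A zo_even))).
subst z; split.
- rewrite [ze + zo]addrC addrAC; apply: vnorm_sqrD_orth.
  exact (parity_span_orth A hskew zox_even ze_odd).
- rewrite mulmxDr opprD addrCA addrC -[vnorm (A *m ze)]vnormN.
  apply: vnorm_sqrD_orth.
  exact (parity_span_orth A hskew res_odd (parity_spanN A Aze_even)).
Qed.
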